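(* Let $K$ be an imaginary quadratic field of class number $1$, with ring of integers $\mathcal{O}_K\subset\mathbb{C}$, and let $z\in\mathcal{O}_K$, $z\neq 0$. There is a natural number $n$ such that $z^n$ is a real number if and only if $\arg z$ is a multiple of $\pi/4$ when $K=\mathbb{Q}(\sqrt{-1})$, a multiple of $\pi/6$ when $K=\mathbb{Q}(\sqrt{-3})$, and a multiple of $\pi/2$ otherwise. *)

From mathcomp Require Import all_boot all_order all_algebra.
From mathcomp Require Import reals trigo.
From mathcomp Require Import complex.
Import GRing.Theory Num.Theory.
Local Open Scope ring_scope.
Local Open Scope complex_scope.

Section QuadDefs.
Variable R : realType.

Definition squarefree (d : nat) : Prop :=
  forall p : nat, prime p -> ~~ (p ^ 2 %| d)%N.

Definition sqrt_neg (d : nat) : R[i] := 0 +i* Num.sqrt (d%:R : R).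

Definition inK (d : nat) (z : R[i]) : Prop :=
  exists a b : rat, z = ratr a + ratr b * sqrt_neg d.

Definition alg_int (z : R[i]) : Prop :=
  exists p : {poly int}, p \is monic /\ root (map_poly (fun k : int => k%:~R) p) z.

Definition OK (d : nat) (z : R[i]) : Prop := inK d z /\ alg_int z.

Definition is_ideal (d : nat) (I : R[i] -> Prop) : Prop :=
  [/\ forall x, I x -> OK d x,
      I 0,
      forall x y, I x -> I y -> I (x + y)
    & forall r x, OK d r -> I x -> I (r * x)].

Definition is_principal (d : nat) (I : R[i] -> Prop) : Prop :=
  exists a, OK d a /\ forall x, I x <-> exists r, OK d r /\ x = a * r.

Definition class_number_one (d : nat) : Prop :=
  forall I, is_ideal d I -> is_principal d I.

Definition arg_multiple_of_pi_div (m : nat) (z : R[i]) : Prop :=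
  exists (k : int) (r : R), 0 < r /\
    z = (r * cos (k%:~R * pi / m%:R)) +i* (r * sin (k%:~R * pi / m%:R)).

End QuadDefs.

From mathcomp Require Import all_boot all_order all_algebra.
From mathcomp Require Import reals trigo complex.
From mathcomp Require Import ring lra zify.
Import Order.TTheory GRing.Theory Num.Theory.
Local Open Scope ring_scope.

(* If z^n is real then w := z / z^* satisfies w^n = 1, and for
   z = a + b sqrt(-d) the number w + w^-1 = 2 (a^2 - d b^2) / (a^2 + d b^2)
   is rational.  Since w^n + w^-n = V_n(w + w^-1, 1) for the Lucas sequence
   V_n, this rational number is a root of the monic integer polynomial
   V_n(X, 1) - 2, hence an integer k with |k| <= 2; geometrically
   k = 2 cos (2 arg z).  The resulting relation (2 - k) a^2 = (2 + k) d b^2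
   makes d (for k = 0) or 3 d (for k = +-1) a rational square, which for
   squarefree d forces d = 1, resp. d = 3, and cos (2 arg z) = k / 2 puts
   arg z on the lattice of multiples of pi/2, pi/4 or pi/6.  Conversely, if
   arg z = j pi / m then z^m is real by de Moivre. *)

Lemma nat_ind2 (P : nat -> Prop) :
  P 0%N -> P 1%N -> (forall n, P n -> P n.+1 -> P n.+2) -> forall n, P n.
Proof.
move=> P0 P1 PS n; suff [] : P n /\ P n.+1 by [].
by elim: n => [|n [Pn Pn1]]; split=> //; apply: PS.
Qed.

Fixpoint lucasV {T : pzRingType} (P Q : T) (n : nat) : T :=
  match n with
  | 0 => 2
  | 1 => P
  | S ((S m) as k) => P * lucasV P Q k - Q * lucasV P Q m
  end.

Lemma lucasVSS {T : pzRingType} (P Q : T) n :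
  lucasV P Q n.+2 = P * lucasV P Q n.+1 - Q * lucasV P Q n.
Proof. by []. Qed.

Lemma rmorph_lucasV {S T : pzRingType} (f : {rmorphism S -> T}) P Q n :
  f (lucasV P Q n) = lucasV (f P) (f Q) n.
Proof.
elim/nat_ind2: n => [|//|n IH IH1]; first by rewrite rmorph_nat.
by rewrite !lucasVSS rmorphB !rmorphM IH IH1.
Qed.

Lemma lucasV_root {T : comPzRingType} (a b : T) n :
  lucasV (a + b) (a * b) n = a ^+ n + b ^+ n.
Proof.
elim/nat_ind2: n => [|//|n IH IH1]; first by rewrite !expr0.
rewrite lucasVSS IH IH1 !exprS; ring.
Qed.

Lemma lucasV_scale {T : comPzRingType} (c P Q : T) n :
  lucasV (c * P) (c ^+ 2 * Q) n = c ^+ n * lucasV P Q n.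
Proof.
elim/nat_ind2: n => [|//|n IH IH1]; first by rewrite mul1r.
rewrite !lucasVSS IH IH1 !exprS; ring.
Qed.

Lemma lucasV_mod (P Q : int) n : (Q %| lucasV P Q n.+1 - P ^+ n.+1)%Z.
Proof.
elim/nat_ind2: n => [||n IH IH1]; first by rewrite subrr dvdz0.
  by rewrite /= -expr2 addrAC subrr add0r rpredN dvdz_mulr.
have -> : lucasV P Q n.+3 - P ^+ n.+3
          = P * (lucasV P Q n.+2 - P ^+ n.+2) - Q * lucasV P Q n.+1.
  by rewrite lucasVSS !exprS; ring.
by apply: rpredB; [exact: dvdz_mull | exact: dvdz_mulr].
Qed.

Lemma lucasV_rat_int (u Q : rat) n :
  Q \is a Num.int -> lucasV u Q n.+1 \is a Num.int -> u \is a Num.int.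
Proof.
(* Clearing denominators, q^n V_n(p/q) = V_n(p, q^2 Q) = p^n mod q. *)
move=> /intrP[Qz ->] /intrP[c Vc].
set p := numq u; set q := denq u.
have scaled : lucasV p (q ^+ 2 * Qz) n.+1 = q ^+ n.+1 * c.
  apply: (@intr_inj rat); rewrite rmorph_lucasV rmorphM !rmorphXn.
  have := lucasV_scale (q%:~R : rat) u Qz%:~R n.+1.
  by rewrite mulrC -numqE Vc => ->; rewrite rmorphM rmorphXn.
have q_dvd_pn : (q %| p ^+ n.+1)%Z.
  have -> : p ^+ n.+1 = q ^+ n.+1 * c - (lucasV p (q ^+ 2 * Qz) n.+1 - p ^+ n.+1).
    by rewrite -scaled; ring.
  apply: rpredB; first by rewrite exprS -mulrA dvdz_mulr.
  by apply: dvdz_trans (lucasV_mod _ _ _); rewrite exprS -mulrA dvdz_mulr.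
have /eqP abs_q : coprime `|q| `|q|.
  move: q_dvd_pn; rewrite dvdzE abszX => /coprime_dvdl; apply.
  exact: coprimeXl (coprime_num_den u).
by rewrite gcdnn in abs_q; rewrite Qint_def -[denq u]gtz0_abs ?denq_gt0 // abs_q.
Qed.

Lemma squarefree1 : squarefree 1.
Proof. by move=> p p_pr; rewrite (pfactor_dvdn 2 p_pr) // logn1. Qed.

Lemma squarefree_prime p : prime p -> squarefree p.
Proof.
move=> p_pr q q_pr.
by rewrite (pfactor_dvdn 2 q_pr (prime_gt0 p_pr)) logn_prime //; case: (q == p).
Qed.

Lemma logn_squarefree d p : (0 < d)%N -> squarefree d -> (logn p d <= 1)%N.
Proof.
move=> d_gt0 sqf_d; have [p_pr|not_pr] := boolP (prime p).
  by rewrite leqNgt -(pfactor_dvdn 2 p_pr d_gt0) sqf_d.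
by rewrite lognE (negPf not_pr).
Qed.

Lemma squarefree_mul_sq c d m : (0 < c)%N -> (0 < d)%N ->
  squarefree c -> squarefree d -> (c * d = m ^ 2)%N -> c = d.
Proof.
move=> c_gt0 d_gt0 sqf_c sqf_d cd_sq; apply: eqn_from_log => // p.
have m_gt0 : (0 < m)%N by rewrite -(ltn_exp2r 0 m (isT : 0 < 2)%N) -cd_sq muln_gt0 c_gt0.
have := congr1 (logn p) cd_sq; rewrite lognM // lognX.
by have := @logn_squarefree c p c_gt0 sqf_c; have := @logn_squarefree d p d_gt0 sqf_d; lia.
Qed.

Lemma rat_sq_int (e : rat) : e ^+ 2 \is a Num.int -> e \is a Num.int.
Proof. by move=> e2_int; apply: (@lucasV_rat_int e 0 1); rewrite //= mul0r subr0 -expr2. Qed.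

Lemma squarefree_eq_of_rat_sq c d (e : rat) : (0 < c)%N -> (0 < d)%N ->
  squarefree c -> squarefree d -> e ^+ 2 = (c * d)%:R -> c = d.
Proof.
move=> c_gt0 d_gt0 sqf_c sqf_d e2.
have /intrP[k ek] : e \is a Num.int by rewrite rat_sq_int // e2 rpred_nat.
apply: (@squarefree_mul_sq c d `|k|%N) => //.
apply/eqP; rewrite -(eqr_nat rat) -e2 ek natrX natr_absz intr_norm.
by rewrite real_normK ?num_real.
Qed.

Local Open Scope complex_scope.

Section ArgumentMultiples.
Variable R : realType.
Implicit Types (x y r t : R) (m : nat) (j : int).

Lemma polar_exprn r t n :
  ((r * cos t) +i* (r * sin t)) ^+ n
  = (r ^+ n * cos (n%:R * t)) +i* (r ^+ n * sin (n%:R * t)).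
Proof.
elim: n => [|n IH]; first by rewrite expr0 !mul0r cos0 sin0 mulr1 mulr0.
rewrite exprS IH -addn1 natrD mulrDl mul1r cosD sinD exprD expr1.
by congr (_ +i* _) => /=; ring.
Qed.

Lemma sin_intpi j : sin (j%:~R * pi) = 0 :> R.
Proof.
have sin_natpi n : sin (n%:R * pi) = 0 :> R.
  elim: n => [|n IH]; first by rewrite mul0r sin0.
  by rewrite -addn1 natrD mulrDl mul1r sinDpi IH oppr0.
by case: j => n; rewrite ?NegzE ?intrN ?mulNr ?sinN sin_natpi ?oppr0.
Qed.

Lemma arg_multiple_Im_exprn m z : (0 < m)%N ->
  arg_multiple_of_pi_div R m z -> complex.Im (z ^+ m) = 0.
Proof.
move=> m_gt0 [j [r [_ ->]]]; rewrite polar_exprn /=.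
have m_neq0 : (m%:R : R) != 0 by rewrite pnatr_eq0 -lt0n.
have -> : m%:R * (j%:~R * pi / m%:R) = j%:~R * pi :> R by field.
by rewrite sin_intpi mulr0.
Qed.

Lemma arg_multiple_dvd m' m z : (0 < m)%N -> (m' %| m)%N ->
  arg_multiple_of_pi_div R m' z -> arg_multiple_of_pi_div R m z.
Proof.
move=> m_gt0 /dvdnP[c m_def] [j [r [r_gt0 ->]]].
move: m_gt0; rewrite m_def muln_gt0 => /andP[c_gt0 m'_gt0].
have m'_neq0 : (m'%:R : R) != 0 by rewrite pnatr_eq0 -lt0n.
have c_neq0 : (c%:R : R) != 0 by rewrite pnatr_eq0 -lt0n.
exists (j * c%:Z), r; split=> //.
by rewrite intrM natrM /=; congr ((r * cos _) +i* (r * sin _)); field; rewrite c_neq0 m'_neq0.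
Qed.

Lemma arg_multiple_of_abs m j r x y : (0 < m)%N -> 0 < r ->
  `|x| = r * cos (j%:~R * pi / m%:R) -> `|y| = r * sin (j%:~R * pi / m%:R) ->
  arg_multiple_of_pi_div R m (x +i* y).
Proof.
move=> m_gt0 r_gt0; set t := j%:~R * pi / m%:R => abs_x abs_y.
have m_neq0 : (m%:R : R) != 0 by rewrite pnatr_eq0 -lt0n.
have cos_pi_sub : cos (pi - t) = - cos t by rewrite addrC cosDpi cosN.
have sin_pi_sub : sin (pi - t) = sin t by rewrite addrC sinDpi sinN opprK.
have [x_ge0|x_lt0] := leP 0 x; have [y_ge0|y_lt0] := leP 0 y.
- exists j, r; split=> //; congr (_ +i* _).
  + by rewrite -abs_x ger0_norm.
  + by rewrite -abs_y ger0_norm.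
- exists (- j), r; split=> //.
  have -> : (- j)%:~R * pi / m%:R = - t by rewrite intrN /t; field.
  rewrite cosN sinN; congr (_ +i* _).
  + by rewrite -abs_x ger0_norm.
  + by rewrite mulrN -abs_y ltr0_norm ?opprK.
- exists (m%:Z - j), r; split=> //.
  have -> : (m%:Z - j)%:~R * pi / m%:R = pi - t by rewrite intrB /t; field.
  rewrite cos_pi_sub sin_pi_sub; congr (_ +i* _).
  + by rewrite mulrN -abs_x ltr0_norm ?opprK.
  + by rewrite -abs_y ger0_norm.
- exists (j - m%:Z), r; split=> //.
  have -> : (j - m%:Z)%:~R * pi / m%:R = - (pi - t) by rewrite intrB /t; field.
  rewrite cosN sinN cos_pi_sub sin_pi_sub; congr (_ +i* _).
  + by rewrite mulrN -abs_x ltr0_norm ?opprK.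
  + by rewrite mulrN -abs_y ltr0_norm ?opprK.
Qed.

Lemma abs_polar_of_cos2 x y t : 0 <= t <= pi / 2 -> (x != 0) || (y != 0) ->
  (1 - cos (2 * t)) * x ^+ 2 = (1 + cos (2 * t)) * y ^+ 2 ->
  exists2 r, 0 < r & `|x| = r * cos t /\ `|y| = r * sin t.
Proof.
move=> /andP[t_ge0 t_le] xy_neq0 rel.
have pi_pos := pi_gt0 R.
have cos_ge0 : 0 <= cos t by apply: cos_ge0_pihalf; apply/andP; split; lra.
have sin_ge0 : 0 <= sin t by apply: sin_ge0_pi; apply/andP; split; lra.
have cos2t : cos (2 * t) = 2 * cos t ^+ 2 - 1.
  have -> : 2 * t = t + t by ring.
  by rewrite cosD -expr2 -expr2 sin2cos2; ring.
set r := Num.sqrt (x ^+ 2 + y ^+ 2).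
have norm_gt0 : 0 < x ^+ 2 + y ^+ 2.
  by case/orP: xy_neq0 => ?; [apply: ltr_pwDl | apply: ltr_pwDr];
    rewrite ?sqr_ge0 // exprn_even_gt0.
have r2 : r ^+ 2 = x ^+ 2 + y ^+ 2 by rewrite sqr_sqrtr // ltW.
have sin2 := sin2cos2 t.
(* With cos^2 t = (1 + cos 2t) / 2 and sin^2 t = (1 - cos 2t) / 2, [rel] reads
   x^2 sin^2 t = y^2 cos^2 t, so x^2 = r^2 cos^2 t and y^2 = r^2 sin^2 t. *)
exists r; first by rewrite sqrtr_gt0.
split; apply/eqP; rewrite -(eqrXn2 (isT : (0 < 2)%N)) ?mulr_ge0 ?sqrtr_ge0 //;
  rewrite real_normK ?num_real // exprMn r2; apply/eqP; nra.
Qed.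

Lemma arg_multiple_of_cos2 m j x y c : (0 < m)%N ->
  0 <= (j%:~R * pi / m%:R : R) <= pi / 2 -> cos (2 * (j%:~R * pi / m%:R)) = c ->
  (x != 0) || (y != 0) -> (1 - c) * x ^+ 2 = (1 + c) * y ^+ 2 ->
  arg_multiple_of_pi_div R m (x +i* y).
Proof.
move=> m_gt0 t_range <- xy_neq0 rel.
have [r r_gt0 [abs_x abs_y]] := abs_polar_of_cos2 _ _ _ t_range xy_neq0 rel.
exact: arg_multiple_of_abs abs_x abs_y.
Qed.

Lemma cos_pi3 : cos (pi / 3) = 1 / 2 :> R.
Proof.
have cos_ge0 : 0 <= cos (pi / 3) :> R.
  by apply: cos_ge0_pihalf; apply/andP; split; have := pi_gt0 R; lra.
have : cos (pi / 3 + pi / 3) = - cos (pi / 3) :> R.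
  have -> : pi / 3 + pi / 3 = - (pi / 3) + pi :> R by field.
  by rewrite cosDpi cosN.
rewrite cosD -!expr2 sin2cos2; nra.
Qed.

Lemma cos_2pi3 : cos (2 * pi / 3) = - (1 / 2) :> R.
Proof.
have -> : 2 * pi / 3 = - (pi / 3) + pi :> R by field.
by rewrite cosDpi cosN cos_pi3.
Qed.

Lemma arg_multiple_of_sqr_rel m k x y : (0 < m)%N -> (2 %| m)%N ->
  (k = 0 -> (4 %| m)%N) -> (`|k|%N = 1%N -> (6 %| m)%N) ->
  -2 <= k <= 2 -> (x != 0) || (y != 0) ->
  (2 - k%:~R) * x ^+ 2 = (2 + k%:~R) * y ^+ 2 ->
  arg_multiple_of_pi_div R m (x +i* y).
Proof.
move=> m_gt0 dvd2 dvd4 dvd6 k_range xy_neq0 rel.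
have pi_pos := pi_gt0 R.
have arg_of m' j : (0 < m')%N -> (m' %| m)%N -> 0 <= (j%:~R * pi / m'%:R : R) <= pi / 2 ->
    cos (2 * (j%:~R * pi / m'%:R)) = k%:~R / 2 :> R -> arg_multiple_of_pi_div R m (x +i* y).
  move=> m'_gt0 m'_dvd t_range cos2t; apply: (arg_multiple_dvd _ _ _ m_gt0 m'_dvd).
  by apply: (arg_multiple_of_cos2 _ _ _ _ _ m'_gt0 t_range cos2t xy_neq0); lra.
have k_cases : k = -2 \/ k = -1 \/ k = 0 \/ k = 1 \/ k = 2.
  by move: k_range => /andP[]; lia.
case: k_cases => [|[|[|[|]]]] k_def; subst k.
- apply: (arg_of 2%N 1) => //; first by apply/andP; split; lra.
  have -> : 2 * ((1%:~R : R) * pi / 2%:R) = pi by field.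
  by rewrite cospi; field.
- apply: (arg_of 6%N 2) => //; first exact: dvd6.
    by apply/andP; split; lra.
  have -> : 2 * ((2%:~R : R) * pi / 6%:R) = 2 * pi / 3 by field.
  by rewrite cos_2pi3; field.
- apply: (arg_of 4%N 1) => //; first exact: dvd4.
    by apply/andP; split; lra.
  have -> : 2 * ((1%:~R : R) * pi / 4%:R) = pi / 2 by field.
  by rewrite cos_pihalf mul0r.
- apply: (arg_of 6%N 1) => //; first exact: dvd6.
    by apply/andP; split; lra.
  have -> : 2 * ((1%:~R : R) * pi / 6%:R) = pi / 3 by field.
  by rewrite cos_pi3; field.
- apply: (arg_of 2%N 0) => //; first by apply/andP; split; lra.
  by rewrite !mul0r mulr0 cos0; field.
Qed.

End ArgumentMultiples.

Lemma lucasV_conj_ratio (R : realType) (z : R[i]) n :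
  z != 0 -> complex.Im (z ^+ n) = 0 -> lucasV (z / conjc z + conjc z / z) 1 n = 2.
Proof.
move=> z_neq0 Im_zn.
have conj_zn : conjc z ^+ n = z ^+ n.
  by rewrite -rmorphXn /=; move: Im_zn; case: (z ^+ n) => x y /= ->; rewrite oppr0.
have w_neq0 : z / conjc z != 0 by rewrite mulf_neq0 ?invr_eq0 ?conjc_eq0.
have wn : (z / conjc z) ^+ n = 1.
  by rewrite expr_div_n conj_zn divff // expf_neq0.
rewrite -[conjc z / z]invf_div -[X in lucasV _ X](mulfV w_neq0).
by rewrite lucasV_root exprVn wn invr1.
Qed.

Section QuadraticNumbers.
Variable R : realType.
Variables (d : nat) (a b : rat).
Let z : R[i] := ratr a + ratr b * sqrt_neg R d.

Lemma sqrt_neg_sqr : sqrt_neg R d ^+ 2 = - d%:R.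
Proof.
rewrite -[d%:R](rmorph_nat (real_complex R)) /sqrt_neg expr2.
apply/eqP; rewrite eq_complex /= !mul0r !mulr0 sub0r addr0 oppr0.
by rewrite -expr2 sqr_sqrtr ?ler0n ?eqxx.
Qed.

Lemma sqrt_neg_conj : conjc (sqrt_neg R d) = - sqrt_neg R d.
Proof. by apply/eqP; rewrite eq_complex /= oppr0 !eqxx. Qed.

Lemma quad_conj : conjc z = ratr a - ratr b * sqrt_neg R d.
Proof.
rewrite /z rmorphD fmorph_rat [X in _ + X]rmorphM fmorph_rat.
by rewrite -[X in _ * X]/(conjc (sqrt_neg R d)) sqrt_neg_conj mulrN.
Qed.

Lemma quad_mul_conj : z * conjc z = ratr (a ^+ 2 + d%:R * b ^+ 2).
Proof.
rewrite quad_conj /z rmorphD rmorphM !rmorphXn rmorph_nat /=.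
move: (ratr a) (ratr b) sqrt_neg_sqr => α β s2.
by rewrite mulrC -subr_sqr exprMn s2; ring.
Qed.

Lemma quad_sqr_add_conj_sqr :
  z ^+ 2 + conjc z ^+ 2 = ratr (2 * (a ^+ 2 - d%:R * b ^+ 2)).
Proof.
rewrite quad_conj /z rmorphM rmorphB rmorphXn rmorphM rmorphXn !rmorph_nat /=.
move: (ratr a) (ratr b) sqrt_neg_sqr => α β s2.
have -> : (α + β * sqrt_neg R d) ^+ 2 + (α - β * sqrt_neg R d) ^+ 2
          = 2 * (α ^+ 2 + β ^+ 2 * sqrt_neg R d ^+ 2) by ring.
by rewrite s2; ring.
Qed.

Lemma quad_trace_ratio : z != 0 ->
  z / conjc z + conjc z / z = ratr (2 * (a ^+ 2 - d%:R * b ^+ 2) / (a ^+ 2 + d%:R * b ^+ 2)).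
Proof.
move=> z_neq0; have zc_neq0 : conjc z != 0 by rewrite conjc_eq0.
have -> : z / conjc z + conjc z / z = (z ^+ 2 + conjc z ^+ 2) / (z * conjc z).
  by field; rewrite z_neq0 zc_neq0.
by rewrite quad_sqr_add_conj_sqr quad_mul_conj fmorph_div.
Qed.

Lemma quad_real_power_rel n : (0 < n)%N -> z != 0 -> complex.Im (z ^+ n) = 0 ->
  exists2 k : int, -2 <= k <= 2 &
    (2 - k%:~R) * a ^+ 2 = (2 + k%:~R) * (d%:R * b ^+ 2).
Proof.
move=> n_gt0 z_neq0 Im_zn.
set A := a ^+ 2; set B := d%:R * b ^+ 2.
have A_ge0 : 0 <= A by rewrite sqr_ge0.
have B_ge0 : 0 <= B by rewrite mulr_ge0 ?ler0n ?sqr_ge0.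
have AB_gt0 : 0 < A + B.
  have : ratr (A + B) != 0 :> R[i] by rewrite -quad_mul_conj mulf_neq0 ?conjc_eq0.
  by rewrite fmorph_eq0 lt_def addr_ge0 // andbT.
set u := 2 * (A - B) / (A + B).
have Vu : lucasV u 1 n = 2.
  apply: (fmorph_inj (ratr : {rmorphism rat -> R[i]})).
  rewrite rmorph_lucasV /= /u /A /B -quad_trace_ratio // rmorph1.
  by rewrite lucasV_conj_ratio // rmorph_nat.
have /intrP[k uk] : u \is a Num.int.
  by apply: (@lucasV_rat_int u 1 n.-1); rewrite ?prednK ?Vu ?rpred_nat.
have rel : k%:~R * (A + B) = 2 * (A - B) by rewrite -uk divfK // gt_eqF.
exists k; last by lra.
by rewrite -!(ler_int rat); apply/andP; split; nra.
Qed.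

Lemma quad_components : z = (ratr a : R) +i* (ratr b * Num.sqrt d%:R).
Proof.
rewrite /z /sqrt_neg -!(fmorph_rat (real_complex R)).
by apply/eqP; rewrite eq_complex /= !mulr0 !mul0r subr0 !addr0 add0r !eqxx.
Qed.

Lemma quad_rel_squarefree_d k : (0 < d)%N -> squarefree d -> z != 0 -> -2 <= k <= 2 ->
  (2 - k%:~R) * a ^+ 2 = (2 + k%:~R) * (d%:R * b ^+ 2) ->
  (k = 0 -> d = 1%N) /\ (`|k|%N = 1%N -> d = 3%N).
Proof.
move=> d_gt0 sqf_d z_neq0 k_range rel.
have b2_neq0 : (`|k| < 2)%N -> b ^+ 2 != 0.
  move=> k_small; rewrite expf_eq0 /=; apply: contra_neq z_neq0 => b0.
  have /eqP : a ^+ 2 = 0.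
    have k_lt2 : (k%:~R : rat) < 2%:~R by rewrite ltr_int; lia.
    by move: rel; rewrite b0 expr0n !mulr0; have := sqr_ge0 a; nra.
  by rewrite expf_eq0 /= => /eqP a0; rewrite /z a0 b0 !rmorph0 mul0r addr0.
have d_of_sq c (e : rat) : (0 < c)%N -> squarefree c -> e ^+ 2 = (c * d)%:R -> c = d.
  by move=> c_gt0 sqf_c; apply: (squarefree_eq_of_rat_sq c d e c_gt0 d_gt0 sqf_c sqf_d).
split=> [k0|k1].
  subst k; have b2 := b2_neq0 isT.
  apply/esym/(d_of_sq 1%N (a / b) isT squarefree1).
  rewrite expr_div_n mul1n; apply: (canLR (mulfK b2)); lra.
have [k_def|k_def] : k = 1 \/ k = -1 by lia.
all: subst k; have b2 := b2_neq0 isT.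
  apply/esym/(d_of_sq 3%N (a / b) isT (squarefree_prime 3 isT)).
  rewrite expr_div_n natrM; apply: (canLR (mulfK b2)); lra.
apply/esym/(d_of_sq 3%N (3 * a / b) isT (squarefree_prime 3 isT)).
rewrite expr_div_n natrM; apply: (canLR (mulfK b2)); lra.
Qed.

Lemma quad_arg_multiple k : (0 < d)%N -> squarefree d -> z != 0 -> -2 <= k <= 2 ->
  (2 - k%:~R) * a ^+ 2 = (2 + k%:~R) * (d%:R * b ^+ 2) ->
  arg_multiple_of_pi_div R (if d == 1%N then 4 else if d == 3%N then 6 else 2) z.
Proof.
move=> d_gt0 sqf_d z_neq0 k_range rel.
have [d1 d3] := quad_rel_squarefree_d k d_gt0 sqf_d z_neq0 k_range rel.
move: z_neq0; rewrite quad_components => z_neq0.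
apply: arg_multiple_of_sqr_rel k_range _ _.
- by case: ifP => // _; case: ifP.
- by case: ifP => // _; case: ifP.
- by move=> /d1 ->.
- by move=> /d3 ->.
- by apply: contraNT z_neq0; rewrite negb_or !negbK => /andP[/eqP -> /eqP ->].
have sqrt_d2 : Num.sqrt (d%:R : R) ^+ 2 = d%:R by rewrite sqr_sqrtr ?ler0n.
have := congr1 (ratr : rat -> R) rel.
rewrite rmorphM rmorphB rmorphXn rmorphM rmorphD rmorphM rmorphXn !rmorph_nat rmorph_int.
by rewrite [(_ * Num.sqrt _) ^+ 2]exprMn sqrt_d2 mulrC; lra.
Qed.

End QuadraticNumbers.

Theorem theorem4p1 (R : realType) (d : nat) (z : R[i]) :
  (0 < d)%N -> squarefree d -> class_number_one R d ->
  OK R d z -> z != 0 ->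
  (exists n : nat, (0 < n)%N /\ complex.Im (z ^+ n) = 0) <->
  arg_multiple_of_pi_div R (if d == 1%N then 4%N else if d == 3%N then 6%N else 2%N) z.
Proof.
move=> d_gt0 sqf_d _ [[a [b ->]] _] z_neq0.
set m := (if d == 1%N then 4 else if d == 3%N then 6 else 2)%N.
split=> [[n [n_gt0 Im_zn]]|arg_z].
  have [k k_range rel] := quad_real_power_rel _ _ _ _ _ n_gt0 z_neq0 Im_zn.
  exact: quad_arg_multiple _ _ _ _ _ d_gt0 sqf_d z_neq0 k_range rel.
have m_gt0 : (0 < m)%N by rewrite /m; case: ifP => // _; case: ifP.
by exists m; split; last exact: arg_multiple_Im_exprn.
Qed.
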